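(* Let $n\ge 6$ and let $\mathcal{F}$ be a finite set of graphs. Let $c:\mathcal{G}_n\to\{0,1\}$ be a concept such that, for all $T\ge0$, the graphs of $\mathcal{G}_n$ are not linearly separable under $\overline{\phi^{(T)}_{\mathsf{WL}}}$ with respect to $c$. Assume that every $G\in\mathcal{G}_n$ with $c(G)=0$ has at least one vertex contained in a subgraph of $G$ isomorphic to a graph in $\mathcal{F}$, while no graph $G$ with $c(G)=1$ has such a vertex. Then, for every $T\ge 0$, the graphs of $\mathcal{G}_n$ are linearly separable under $\overline{\phi^{(T)}_{\mathsf{WL},\mathcal{F}}}$ with respect to $c$.
   Context: $\mathcal{G}_n$ is the set of (unlabeled, simple, undirected) graphs on $n$ vertices; ''subgraph'' means induced subgraph $G[X]$, $X\subseteq V(G)$. $1$-WL: $C^1_0$ constant, $C^1_t(v)=\mathsf{RELABEL}(C^1_{t-1}(v),\{\!\{C^1_{t-1}(u):u\in N(v)\}\!\})$ with a fixed injective $\mathsf{RELABEL}$ shared by all graphs. $1$-WL$_{\mathcal{F}}$: same update with initial colour $(\ell_F(v))_{F\in\mathcal{F}}$, $\ell_F(v)=1$ if $v$ lies in some $X$ with $G[X]$ isomorphic to $F$, else $0$. $\phi_t(G)$ (resp. $\phi_{\mathcal{F},t}(G)$) counts the vertices of $G$ of each colour occurring at round $t$ over $\mathcal{G}_n$; $\phi^{(T)}_{\mathsf{WL}}$, $\phi^{(T)}_{\mathsf{WL},\mathcal{F}}$ are the concatenations over rounds $0,\dots,T$, and the bar denotes normalisation to unit Euclidean norm. Linearly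 separable with respect to $c$: there exist $\mathbf{w},b$ with $\mathbf{w}^\top\mathbf{x}_G+b>0$ when $c(G)=1$ and $<0$ when $c(G)=0$, $\mathbf{x}_G$ the feature vector of $G$. *)

From HB Require Import structures.
From mathcomp Require Import all_boot all_order all_algebra.
From mathcomp Require Import reals.
Set Implicit Arguments. Unset Strict Implicit. Unset Printing Implicit Defensive.
Import Order.TTheory GRing.Theory Num.Theory.

(* Simple undirected graphs on the vertex set 'I_n: symmetric irreflexive
   sets of ordered pairs.  The (finite) type graph n plays the role of G_n. *)
Definition is_sgraph n (A : {set 'I_n * 'I_n}) : bool :=
  [forall u, forall v, ((u, v) \in A) == ((v, u) \in A)] &&
  [forall u, (u, u) \notin A].

Definition graph n := {A : {set 'I_n * 'I_n} | is_sgraph A}.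

Definition adj n (G : graph n) (u v : 'I_n) : bool := (u, v) \in val G.

(* Vertex v of G lies in some X with G[X] isomorphic to F (induced). *)
Definition in_copy m n (F : graph m) (G : graph n) (v : 'I_n) : bool :=
  [exists f : {ffun 'I_m -> 'I_n},
     [&& injectiveb f, v \in codom f &
         [forall i, forall j, adj F i j == adj G (f i) (f j)]]].

Definition pattern := {m : nat & graph m}.

Definition in_family n (Fs : seq pattern) (G : graph n) (v : 'I_n) : bool :=
  has (fun F : pattern => in_copy (projT2 F) G v) Fs.

(* Colours are finite trees; RELABEL is the injective tree constructor. *)
Definition colour := GenTree.tree nat.
Definition colle (a b : colour) : bool := (pickle a <= pickle b)%N.

(* Canonical representation of a multiset of colours: its sorted list. *)
Definition relabel (c : colour) (ms : seq colour) : colour :=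
  GenTree.Node 0 [:: c; GenTree.Node 0 (sort colle ms)].

Local Open Scope ring_scope.
Section WL.
Variable n : nat.
Variable init : graph n -> 'I_n -> colour.

Fixpoint wl_col (G : graph n) (t : nat) : 'I_n -> colour :=
  match t with
  | 0 => init G
  | t'.+1 => fun v => relabel (wl_col G t' v)
                        [seq wl_col G t' u | u <- enum 'I_n & adj G v u]
  end.

Definition wl_index (T : nat) : seq (nat * colour) :=
  undup (flatten [seq [seq (t, wl_col G t v) | G <- enum {: graph n},
                                                 v <- enum 'I_n]
                  | t <- iota 0 T.+1]).

Definition wl_feat (R : realType) (T : nat) (G : graph n)
  : 'rV[R]_(size (wl_index T)) :=
  \row_i (#|[pred v | wl_col G (nth (0%N, GenTree.Leaf 0) (wl_index T) i).1 v
                      == (nth (0%N, GenTree.Leaf 0) (wl_index T) i).2]|)%:R.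

Definition normalize (R : realType) k (x : 'rV[R]_k) : 'rV[R]_k :=
  (Num.sqrt (\sum_i x 0 i ^+ 2))^-1 *: x.

Definition wl_nfeat (R : realType) (T : nat) (G : graph n) :=
  normalize (wl_feat R T G).
End WL.

Definition init_plain n (G : graph n) (v : 'I_n) : colour := GenTree.Leaf 0.

Definition init_F (Fs : seq pattern) n (G : graph n) (v : 'I_n) : colour :=
  GenTree.Node 1 [seq GenTree.Leaf (nat_of_bool (in_copy (projT2 F) G v)) | F <- Fs].

Definition lin_sep (R : realType) n k (X : graph n -> 'rV[R]_k)
  (c : graph n -> bool) : Prop :=
  exists (w : 'rV[R]_k) (b : R), forall G : graph n,
    (c G -> 0 < \sum_i w 0 i * X G 0 i + b) /\
    (~~ c G -> \sum_i w 0 i * X G 0 i + b < 0).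

From HB Require Import structures.
From mathcomp Require Import all_boot all_order all_algebra.
From mathcomp Require Import reals.
Set Implicit Arguments. Unset Strict Implicit. Unset Printing Implicit Defensive.
Import Order.TTheory GRing.Theory Num.Theory.
Local Open Scope ring_scope.

(* Already the round-0 colours of 1-WL_F separate the concept: a vertex has
   the all-zero initial colour iff it lies in no copy of a pattern, so the
   weight vector with +1 on that colour, -(n+1) on every other round-0 colour
   and 0 elsewhere gives the feature vector of G the score n when c(G) = 1 and
   a negative score otherwise.  Normalisation rescales each feature vector by
   a positive factor and so preserves the sign. *)

Lemma dot_normalize (R : realType) k (w x : 'rV[R]_k) :
  \sum_i w 0 i * normalize x 0 i =
  (Num.sqrt (\sum_i x 0 i ^+ 2))^-1 * \sum_i w 0 i * x 0 i.
Proof.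
by rewrite mulr_sumr; apply: eq_bigr => i _; rewrite /normalize mxE mulrCA.
Qed.

Lemma normalize_factor_gt0 (R : realType) k (x : 'rV[R]_k) i :
  x 0 i != 0 -> 0 < (Num.sqrt (\sum_j x 0 j ^+ 2))^-1.
Proof.
move=> xi_neq0; rewrite invr_gt0 sqrtr_gt0 (bigD1 i) //=.
apply: (@lt_le_trans _ _ (x 0 i ^+ 2)); first by rewrite exprn_even_gt0.
by rewrite lerDl sumr_ge0 // => j _; rewrite sqr_ge0.
Qed.

Lemma lin_sep_normalize (R : realType) n k (X : graph n -> 'rV[R]_k)
    (c : graph n -> bool) (w : 'rV[R]_k) :
    (forall G, exists i, X G 0 i != 0) ->
    (forall G, c G -> 0 < \sum_i w 0 i * X G 0 i) ->
    (forall G, ~~ c G -> \sum_i w 0 i * X G 0 i < 0) ->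
  lin_sep (fun G => normalize (X G)) c.
Proof.
move=> X_neq0 pos neg; exists w, 0 => G; rewrite addr0 dot_normalize.
have [i /normalize_factor_gt0 factor_gt0] := X_neq0 G.
by split=> [/pos|/neg]; [exact: mulr_gt0 | rewrite pmulr_rlt0].
Qed.

Lemma sum_penalty_lt0 (R : realType) (T : finType) (P : pred T) (m : nat) :
    (#|T| < m)%N -> (exists v, ~~ P v) ->
  \sum_v (if P v then 1 else - m%:R) < 0 :> R.
Proof.
move=> card_lt [v Pv]; rewrite (bigD1 v) //= (negbTE Pv) addrC subr_lt0.
apply: (@le_lt_trans _ _ (#|T|%:R)); last by rewrite ltr_nat.
apply: (@le_trans _ _ (\sum_(u : T) 1)); last by rewrite sumr_const.
apply: (@le_trans _ _ (\sum_(u | u != v) 1)).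
  by apply: ler_sum => u _; case: (P u) => //; rewrite (le_trans _ ler01) // oppr_le0.
by rewrite [X in _ <= X](bigD1 v) //= lerDr ler01.
Qed.

Section RoundZero.
Variables (R : realType) (n : nat) (init : graph n -> 'I_n -> colour) (T : nat).

Local Notation idx := (wl_index init T).
Local Notation d := (0%N, GenTree.Leaf 0).

Lemma wl_index_round0 G v : (0%N, init G v) \in idx.
Proof.
rewrite mem_undup; apply/flatten_mapP; exists 0%N; first by rewrite mem_iota.
by apply: (@allpairs_f _ _ _ (fun G v => (0%N, wl_col init G 0 v)));
   rewrite mem_enum.
Qed.

Lemma wl_feat_round0 G v (i := index (0%N, init G v) idx) (lt_i : (i < size idx)%N) :
  wl_feat init R T G 0 (Ordinal lt_i) =
  #|[pred u | init G u == init G v]|%:R.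
Proof. by rewrite mxE /= nth_index // wl_index_round0. Qed.

Lemma wl_feat_neq0 G : (0 < n)%N -> exists i, wl_feat init R T G 0 i != 0.
Proof.
move=> n_gt0; pose v := Ordinal n_gt0.
have lt_i : (index (0%N, init G v) idx < size idx)%N.
  by rewrite index_mem wl_index_round0.
exists (Ordinal lt_i); rewrite wl_feat_round0 pnatr_eq0 -lt0n.
by apply/card_gt0P; exists v; rewrite inE /=.
Qed.

Definition round0_weight (g : colour -> R) : 'rV[R]_(size idx) :=
  \row_i (let p := nth d idx i in if p.1 == 0%N then g p.2 else 0).

(* Each vertex is counted in exactly one round-0 coordinate, because
   [wl_index] is duplicate-free and contains every round-0 colour. *)
Lemma dot_round0_weight (g : colour -> R) G :
  \sum_i round0_weight g 0 i * wl_feat init R T G 0 i = \sum_v g (init G v).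
Proof.
pose h (p : nat * colour) :=
  (if p.1 == 0%N then g p.2 else 0) * #|[pred u | wl_col init G p.1 u == p.2]|%:R.
transitivity (\sum_(p <- idx) h p).
  by rewrite (big_nth d) big_mkord; apply: eq_bigr => i _; rewrite !mxE.
have h_vertices p : h p = \sum_v (if p == (0%N, init G v) then g (init G v) else 0).
  case: p => [[|t] col]; last by rewrite /h mul0r big1.
  rewrite /h /= mulr_natr -sumr_const big_mkcond /=; apply: eq_bigr => v _.
  by rewrite inE xpair_eqE /= eq_sym; case: eqP => // ->.
under eq_bigr do rewrite h_vertices.
rewrite exchange_big /=.
apply: eq_bigr => v _; rewrite -big_mkcond big_const_seq count_uniq_mem ?undup_uniq //.
by rewrite wl_index_round0 /= addr0.
Qed.

End RoundZero.

Definition blank_F (Fs : seq pattern) : colour :=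
  GenTree.Node 1 [seq GenTree.Leaf 0 | F <- Fs].

Lemma init_F_eq_blank (Fs : seq pattern) n (G : graph n) v :
  (init_F Fs G v == blank_F Fs) = ~~ in_family Fs G v.
Proof.
rewrite /init_F /blank_F /in_family -all_predC.
apply/eqP/allP => [[/eq_in_map E] F /E /= [] | E].
  by case: in_copy.
congr GenTree.Node; apply/eq_in_map => F /E /=.
by case: in_copy.
Qed.

Theorem proposition13 (R : realType) (n : nat) (Fs : seq pattern)
  (c : graph n -> bool) :
  (6 <= n)%N ->
  (forall T : nat, ~ lin_sep (@wl_nfeat n (@init_plain n) R T) c) ->
  (forall G : graph n, ~~ c G -> exists v : 'I_n, in_family Fs G v) ->
  (forall G : graph n, c G -> forall v : 'I_n, ~~ in_family Fs G v) ->
  forall T : nat, lin_sep (@wl_nfeat n (@init_F Fs n) R T) c.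
Proof.
move=> n_ge6 _ copy_if_neg no_copy_if_pos T.
have n_gt0 : (0 < n)%N by apply: leq_trans n_ge6.
pose g col : R := if col == blank_F Fs then 1 else - n.+1%:R.
have score G : \sum_i round0_weight (init_F Fs (n:=n)) T g 0 i
                 * wl_feat (init_F Fs (n:=n)) R T G 0 i =
               \sum_v (if ~~ in_family Fs G v then 1 else - n.+1%:R).
  by rewrite dot_round0_weight; apply: eq_bigr => v _; rewrite /g init_F_eq_blank.
apply: (lin_sep_normalize (w := round0_weight _ T g)) => G.
- exact: wl_feat_neq0.
- move=> cG; rewrite score (eq_bigr (fun=> 1)) => [|v _]; last first.
    by rewrite no_copy_if_pos.
  by rewrite sumr_const card_ord ltr0n.
- move=> /copy_if_neg [v in_v]; rewrite score sum_penalty_lt0 ?card_ord //.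
  by exists v; rewrite negbK.
Qed.
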